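(* Let $(X,d)$ be a compact metric space and $T:X\to X$ a continuous map with topological entropy $\lambda\ge0$ (finite). Then for every $x\in X$ and $\epsilon>0$ there is a map $f$ from $\mathbb N$ to the orbit $\{T^nx:n\in\mathbb N\}$ with finite range such that the anqie entropy of $f$ is at most $\lambda$ and $\sup_n d(T^nx,f(n))<\epsilon$.
   Context: $\mathbb N=\{0,1,2,\ldots\}$. For a compact Hausdorff space $X$ and a map $f:\mathbb N\to X$, let $X_f$ be the closure in $X^{\mathbb N}$ (product topology) of $\{(f(n),f(n+1),f(n+2),\ldots):n\in\mathbb N\}$, and let $B_f$ be the shift $(\omega_0,\omega_1,\ldots)\mapsto(\omega_1,\omega_2,\ldots)$ restricted to $X_f$. The anqie entropy of $f$ is the topological entropy $h(B_f)$. *)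

From Stdlib Require Import Reals Lra List.
Open Scope R_scope.

Definition is_metric {X : Type} (d : X -> X -> R) : Prop :=
  (forall x y, 0 <= d x y) /\
  (forall x y, d x y = 0 <-> x = y) /\
  (forall x y, d x y = d y x) /\
  (forall x y z, d x z <= d x y + d y z).

Definition is_open {X : Type} (d : X -> X -> R) (U : X -> Prop) : Prop :=
  forall x, U x -> exists r, 0 < r /\ forall y, d x y < r -> U y.

Definition is_compact {X : Type} (d : X -> X -> R) : Prop :=
  forall (I : Type) (U : I -> X -> Prop),
    (forall i, is_open d (U i)) ->
    (forall x, exists i, U i x) ->
    exists l : list I, forall x, exists i, In i l /\ U i x.

Definition is_continuous {X : Type} (d : X -> X -> R) (T : X -> X) : Prop :=
  forall x eps, 0 < eps -> exists delta, 0 < delta /\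
    forall y, d x y < delta -> d (T x) (T y) < eps.

(* ---------- Bowen topological entropy ----------
   [gap x y eps] means "rho x y > eps" for a compatible metric rho.
   (n,eps)-separated: some j < n with rho (S^j x) (S^j y) > eps.
   h(S|K) = sup_{eps>0} limsup_n (1/n) log sep(n,eps), sep = max card of an
   (n,eps)-separated subset of K.  Since h may be +oo we express the two
   relations h <= lam and h >= lam by unfolding sup / limsup. *)

Definition nsep {Y : Type} (gap : Y -> Y -> R -> Prop) (S : Y -> Y)
  (n : nat) (eps : R) (x y : Y) : Prop :=
  exists j, (j < n)%nat /\ gap (Nat.iter j S x) (Nat.iter j S y) eps.

Definition sep_set {Y : Type} (gap : Y -> Y -> R -> Prop) (S : Y -> Y)
  (K : Y -> Prop) (n : nat) (eps : R) (E : list Y) : Prop :=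
  Forall K E /\ ForallOrdPairs (nsep gap S n eps) E.

Definition entropy_le {Y : Type} (gap : Y -> Y -> R -> Prop) (S : Y -> Y)
  (K : Y -> Prop) (lam : R) : Prop :=
  forall eps, 0 < eps -> forall delta, 0 < delta ->
    exists N, forall n, (N <= n)%nat -> forall E, sep_set gap S K n eps E ->
      INR (length E) <= exp (INR n * (lam + delta)).

Definition entropy_ge {Y : Type} (gap : Y -> Y -> R -> Prop) (S : Y -> Y)
  (K : Y -> Prop) (lam : R) : Prop :=
  forall mu, mu < lam -> exists eps, 0 < eps /\
    forall N, exists n, (N <= n)%nat /\ exists E, sep_set gap S K n eps E /\
      exp (INR n * mu) < INR (length E).

Definition metric_gap {X : Type} (d : X -> X -> R) (x y : X) (eps : R) : Prop :=
  eps < d x y.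

Definition top_entropy_eq {X : Type} (d : X -> X -> R) (T : X -> X) (lam : R) : Prop :=
  entropy_le (metric_gap d) T (fun _ => True) lam /\
  entropy_ge (metric_gap d) T (fun _ => True) lam.

(* compatible metric on X^N (product topology):
   rho w w' = sup_k 2^{-k} min(d (w k) (w' k), 1); [prod_gap w w' eps] is rho w w' > eps *)
Definition prod_gap {X : Type} (d : X -> X -> R) (w w' : nat -> X) (eps : R) : Prop :=
  exists k, eps < (/2) ^ k * Rmin (d (w k) (w' k)) 1.

Definition shift {X : Type} (w : nat -> X) : nat -> X := fun k => w (S k).

(* X_f : closure in X^N (product topology) of {(f n, f (n+1), ...) : n} ;
   basic neighbourhoods constrain finitely many coordinates. *)
Definition anqie_space {X : Type} (d : X -> X -> R) (f : nat -> X) (w : nat -> X) : Prop :=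
  forall m eps, 0 < eps -> exists n, forall k, (k < m)%nat -> d (f (n + k)%nat) (w k) < eps.

Definition anqie_entropy_le {X : Type} (d : X -> X -> R) (f : nat -> X) (lam : R) : Prop :=
  entropy_le (prod_gap d) shift (anqie_space d f) lam.

From Stdlib Require Import Reals Lra Lia List Classical IndefiniteDescription.
Import ListNotations.
Open Scope R_scope.

(* A maximal (n, r)-separated set of orbit points is (n, r)-spanning, so entropy lam
   gives, at every scale k, a block length L_k and at most exp (L_k (lam + 1/(k+1)))
   orbit points whose L_k-segments shadow every L_k-segment of the orbit within
   eps / 2^(k+2).  With L_k dividing L_(k+1), the orbit is rewritten top-down: at
   level k each block of length L_k is replaced by the segment of its shadowing
   representative, and the rewriting continues inside that block at level k-1.
   The errors sum to less than eps, only finitely many level-0 segments occur, and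
   every aligned L_k-block of the result is one of few words.  Hence windows of
   length n of f take at most exp (n (lam + delta)) values, and separated sets of
   the anqie shift inject into windows. *)

Lemma exp_le_compat a b : a <= b -> exp a <= exp b.
Proof. intros [Hlt | <-]; [left; apply exp_increasing | right]; auto. Qed.

Lemma exp_pow_INR a n : exp a ^ n = exp (INR n * a).
Proof.
  induction n as [|n IH]; simpl; [rewrite Rmult_0_l, exp_0; reflexivity|].
  rewrite IH, <- exp_plus. f_equal. destruct n; simpl; lra.
Qed.

Lemma exists_inv_succ_le e : 0 < e -> exists j, / (INR j + 1) <= e.
Proof.
  intros He. destruct (INR_archimed e 1 He) as [j Hj]. exists j.
  pose proof (pos_INR j).
  apply (Rmult_le_reg_l (INR j + 1)); [lra|]. rewrite Rinv_r; nra.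
Qed.

Lemma exists_max_bounded_nat (Q : nat -> Prop) (B : nat) :
  (exists n, Q n) -> (forall n, Q n -> (n <= B)%nat) ->
  exists m, Q m /\ forall n, Q n -> (n <= m)%nat.
Proof.
  revert Q; induction B as [|B IH]; intros Q [n0 Hn0] Hb.
  - exists n0; split; auto. intros n Hn. pose proof (Hb _ Hn). lia.
  - destruct (classic (Q (S B))) as [HQ|HQ].
    + exists (S B); split; auto.
    + apply IH; [exists n0; auto|]. intros n Hn. specialize (Hb _ Hn).
      destruct (Nat.eq_dec n (S B)); [subst; contradiction | lia].
Qed.

Lemma ForallOrdPairs_map {A B : Type} (R : B -> B -> Prop) (g : A -> B) (l : list A) :
  ForallOrdPairs (fun a b => R (g a) (g b)) l -> ForallOrdPairs R (map g l).
Proof.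
  intros H; induction H; simpl; constructor; auto.
  rewrite Forall_forall in *. intros y Hy. apply in_map_iff in Hy as [z [<- Hz]]. auto.
Qed.

Lemma ForallOrdPairs_impl_Forall {A : Type} (P : A -> Prop) (R R' : A -> A -> Prop)
  (l : list A) :
  (forall a b, P a -> P b -> R a b -> R' a b) ->
  Forall P l -> ForallOrdPairs R l -> ForallOrdPairs R' l.
Proof.
  intros H HP HR. induction HR as [|a l Ha HR IH]; constructor; inversion HP; subst.
  - rewrite Forall_forall in *. auto.
  - auto.
Qed.

Fixpoint tuples {A : Type} (W : list A) (n : nat) : list (list A) :=
  match n with
  | O => [nil]
  | S n' => flat_map (fun a => map (cons a) (tuples W n')) W
  end.

Lemma length_tuples {A : Type} (W : list A) n : length (tuples W n) = (length W ^ n)%nat.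
Proof.
  induction n as [|n IH]; simpl; [reflexivity|]. rewrite <- IH.
  clear IH. generalize (tuples W n). intros U.
  induction W as [|a W IHW]; simpl; [reflexivity|].
  rewrite length_app, length_map, IHW. reflexivity.
Qed.

Lemma in_tuples {A : Type} (W : list A) n (t : list A) :
  length t = n -> (forall a, In a t -> In a W) -> In t (tuples W n).
Proof.
  revert t; induction n as [|n IH]; intros [|a t] Hl Hin; simpl in *; try discriminate.
  - left; reflexivity.
  - apply in_flat_map. exists a; split; auto. apply in_map, IH; auto.
Qed.

Lemma div_mod_block (a b L R0 : nat) : (b < L)%nat -> (0 < R0)%nat ->
  ((a * L + b) / (R0 * L) = a / R0)%nat /\
  ((a * L + b) mod (R0 * L) = (a mod R0) * L + b)%nat.
Proof.
  intros Hb HR.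
  assert (Ha := Nat.div_mod a R0 ltac:(lia)).
  assert (Hm := Nat.mod_upper_bound a R0 ltac:(lia)).
  assert (Hlt : ((a mod R0) * L + b < R0 * L)%nat) by nia.
  assert (Heq : (a * L + b = R0 * L * (a / R0) + ((a mod R0) * L + b))%nat).
  { rewrite Ha at 1. nia. }
  split; symmetry; [eapply Nat.div_unique | eapply Nat.mod_unique]; eauto.
Qed.

Lemma iter_shift {X : Type} (j : nat) (w : nat -> X) (k : nat) :
  Nat.iter j shift w k = w (j + k)%nat.
Proof.
  revert k; induction j as [|j IH]; intros k; simpl; auto.
  unfold shift at 1. rewrite IH. f_equal. lia.
Qed.

(** * Spanning sets of the orbit *)

Definition shadows {X : Type} (d : X -> X -> R) (T : X -> X) (n : nat) (r : R)
  (y z : X) : Prop :=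
  forall b, (b < n)%nat -> d (Nat.iter b T y) (Nat.iter b T z) <= r.

Lemma not_nsep_shadows {X : Type} (d : X -> X -> R) (T : X -> X) n r y z :
  ~ nsep (metric_gap d) T n r y z -> shadows d T n r y z.
Proof. intros H b Hb. apply Rnot_lt_le. intros Hlt. apply H. exists b. auto. Qed.

Lemma orbit_spanning_set {X : Type} (d : X -> X -> R) (T : X -> X) (x : X) (lam r dl : R) :
  entropy_le (metric_gap d) T (fun _ => True) lam -> 0 < r -> 0 < dl ->
  exists N, forall n, (N <= n)%nat -> exists A : list nat,
    In 0%nat A /\ INR (length A) <= exp (INR n * (lam + dl)) /\
    forall m, exists s, In s A /\ shadows d T n r (Nat.iter m T x) (Nat.iter s T x).
Proof.
  intros Hent Hr Hdl.
  destruct (Hent r Hr dl Hdl) as [N HN]. exists N. intros n Hn.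
  set (P := fun A : list nat => In 0%nat A /\
        ForallOrdPairs (fun a b => nsep (metric_gap d) T n r (Nat.iter a T x) (Nat.iter b T x)) A).
  assert (Hbound : forall A, P A -> INR (length A) <= exp (INR n * (lam + dl))).
  { intros A [_ HA]. rewrite <- (length_map (fun a => Nat.iter a T x)).
    apply HN; [exact Hn | split].
    - apply Forall_forall; auto.
    - apply ForallOrdPairs_map, HA. }
  destruct (INR_archimed 1 (exp (INR n * (lam + dl)))) as [B HB]; [lra|].
  destruct (exists_max_bounded_nat (fun k => exists A, P A /\ length A = k) B)
    as (k & (A & HPA & <-) & Hmax).
  - exists 1%nat, [0%nat]. split; [split; [left | repeat constructor] | ]; reflexivity.
  - intros k (A & HA & <-). apply Hbound in HA.
    assert (Hlt : INR (length A) < INR B) by lra. apply INR_lt in Hlt. lia.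
  - exists A. split; [apply HPA | split; [apply Hbound, HPA |]].
    intros m. apply NNPP. intros Hno.
    assert (HPm : P (m :: A)).
    { split; [right; apply HPA | constructor; [| apply HPA]].
      apply Forall_forall. intros s Hs. apply NNPP. intros Hns. apply Hno.
      exists s. split; [exact Hs | apply not_nsep_shadows, Hns]. }
    specialize (Hmax _ (ex_intro _ (m :: A) (conj HPm eq_refl))). simpl in Hmax. lia.
Qed.

Lemma orbit_spanning_selector {X : Type} (d : X -> X -> R) (T : X -> X) (x : X)
  (lam r dl : R) :
  (forall y, d y y = 0) ->
  entropy_le (metric_gap d) T (fun _ => True) lam -> 0 < r -> 0 < dl ->
  exists N, forall n, (N <= n)%nat -> exists (reps : list nat) (rep : nat -> nat),
    INR (length reps) <= exp (INR n * (lam + dl)) /\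
    (forall m, In (rep m) reps) /\ rep 0%nat = 0%nat /\
    forall m, shadows d T n r (Nat.iter m T x) (Nat.iter (rep m) T x).
Proof.
  intros Hdd Hent Hr Hdl.
  destruct (orbit_spanning_set d T x lam r dl Hent Hr Hdl) as [N HN].
  exists N. intros n Hn. destruct (HN n Hn) as (reps & H0 & Hlen & Hspan).
  destruct (functional_choice _ Hspan) as [rep Hrep].
  exists reps, (fun m => if Nat.eqb m 0 then 0%nat else rep m).
  split; [exact Hlen | split; [| split; [reflexivity |]]]; intros m;
    destruct (Nat.eqb_spec m 0) as [->|]; try apply Hrep.
  - exact H0.
  - intros b _. rewrite Hdd. lra.
Qed.

(** * The multiscale code *)

Section MultiscaleCode.

Variables (L : nat -> nat) (rep : nat -> nat -> nat).

(* [code k m i]: orbit index standing at position [i] when the orbit segment starting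
   at [T^m x] is rewritten from level [k - 1] down to level 0. *)
Fixpoint code (k m : nat) {struct k} : nat -> nat :=
  match k with
  | O => fun i => (m + i)%nat
  | S k' => fun i => code k' (rep k' (m + i / L k' * L k')) (i mod L k')
  end.

Hypothesis L_pos : forall k, (0 < L k)%nat.
Hypothesis L_dvd : forall k, Nat.divide (L k) (L (S k)).
Hypothesis L_gt : forall k, (k < L k)%nat.
Hypothesis rep_zero : forall k, rep k 0%nat = 0%nat.

Lemma L_dvd_add n j : Nat.divide (L j) (L (n + j)).
Proof.
  induction n as [|n IH]; [apply Nat.divide_refl|].
  eapply Nat.divide_trans; [exact IH | apply L_dvd].
Qed.

Lemma code_stable n k i : (i < L k)%nat -> code (n + k) 0 i = code k 0 i.
Proof.
  intros Hi. induction n as [|n IH]; [reflexivity|].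
  cbn [code Nat.add]. rewrite <- IH.
  assert (Hi' : (i < L (n + k))%nat).
  { pose proof (Nat.divide_pos_le _ _ (L_pos (n + k)) (L_dvd_add n k)). lia. }
  rewrite (Nat.div_small _ _ Hi'), (Nat.mod_small _ _ Hi'), Nat.mul_0_l, rep_zero.
  reflexivity.
Qed.

Lemma code_block n j m a : exists s, forall b, (b < L j)%nat ->
  code (S n + j) m (a * L j + b) = code j (rep j s) b.
Proof.
  revert m a; induction n as [|n IH]; intros m a.
  - exists (m + a * L j)%nat. intros b Hb. cbn [code Nat.add].
    destruct (div_mod_block a b (L j) 1 Hb ltac:(lia)) as [E1 E2].
    rewrite Nat.mul_1_l in E1, E2. rewrite E1, E2, Nat.div_1_r, Nat.mod_1_r. reflexivity.
  - destruct (L_dvd_add (S n) j) as [R0 HR].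
    assert (HR0 : (0 < R0)%nat) by (pose proof (L_pos (S n + j)); nia).
    destruct (IH (rep (S n + j) (m + a / R0 * (R0 * L j))) (a mod R0)) as [s Hs].
    exists s. intros b Hb. rewrite <- (Hs b Hb).
    change (S (S n) + j)%nat with (S (S n + j)). cbn [code]. rewrite HR.
    destruct (div_mod_block a b (L j) R0 Hb HR0) as [E1 E2]. rewrite E1, E2. reflexivity.
Qed.

(* The diagonal [code (S n) 0 n] is the orbit index used at time [n]. *)
Lemma code_diag_block j q : exists s, forall b, (b < L j)%nat ->
  code (S (q * L j + b)) 0 (q * L j + b) = code j (rep j s) b.
Proof.
  destruct (code_block ((q + 1) * L j) j 0 q) as [s Hs]. exists s. intros b Hb.
  rewrite <- (Hs b Hb). set (n := (q * L j + b)%nat).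
  assert (Hn : (n < (q + 1) * L j)%nat) by (unfold n; nia).
  replace (S ((q + 1) * L j) + j)%nat with ((S ((q + 1) * L j) + j - S n) + S n)%nat by lia.
  symmetry. apply code_stable. pose proof (L_gt (S n)). lia.
Qed.

Variable reps0 : list nat.
Hypothesis rep_in0 : forall m, In (rep 0 m) reps0.

Lemma code_diag_range n :
  In (code (S n) 0 n) (map (fun p => fst p + snd p)%nat (list_prod reps0 (seq 0 (L 0)))).
Proof.
  cbn [code]. generalize (Nat.mod_upper_bound n (L n) ltac:(specialize (L_pos n); lia)).
  generalize (n mod L n)%nat (0 + n / L n * L n)%nat.
  induction n as [|k IH]; intros i s Hi; cbn [code].
  - apply in_map_iff. exists (rep 0 s, i). split; [reflexivity|].
    apply in_prod; [apply rep_in0 | apply in_seq; lia].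
  - apply IH, Nat.mod_upper_bound. specialize (L_pos k). lia.
Qed.

Variables (X : Type) (d : X -> X -> R) (T : X -> X) (x : X) (c : R).
Hypothesis d_metric : is_metric d.
Hypothesis rep_shadows : forall k m,
  shadows d T (L k) (c * (/ 2) ^ S k) (Nat.iter m T x) (Nat.iter (rep k m) T x).

(* Level [k] contributes the shadowing error [c / 2^(k+1)]. *)
Lemma code_dist k m i :
  d (Nat.iter (m + i) T x) (Nat.iter (code k m i) T x) <= c * (1 - (/ 2) ^ k).
Proof.
  destruct d_metric as (_ & Hzero & _ & Htri).
  revert m i; induction k as [|k IH]; intros m i; cbn [code].
  - rewrite (proj2 (Hzero _ _) eq_refl). simpl. lra.
  - set (q := (i / L k)%nat). set (b := (i mod L k)%nat).
    assert (Hb : (b < L k)%nat) by (apply Nat.mod_upper_bound; specialize (L_pos k); lia).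
    assert (Hi : (m + i = b + (m + q * L k))%nat).
    { pose proof (Nat.div_mod i (L k) ltac:(specialize (L_pos k); lia)). fold q b in H. lia. }
    eapply Rle_trans; [apply (Htri _ (Nat.iter (b + rep k (m + q * L k)) T x)) |].
    replace (c * (1 - (/ 2) ^ S k)) with (c * (/ 2) ^ S k + c * (1 - (/ 2) ^ k))
      by (simpl; field).
    apply Rplus_le_compat.
    + rewrite Hi, (Nat.iter_add b), (Nat.iter_add b). apply rep_shadows, Hb.
    + rewrite Nat.add_comm. apply IH.
Qed.

Lemma code_diag_dist n : 0 <= c -> d (Nat.iter n T x) (Nat.iter (code (S n) 0 n) T x) <= c.
Proof.
  intros Hc. eapply Rle_trans; [apply (code_dist (S n) 0 n) |].
  pose proof (pow_le (/ 2) (S n) ltac:(lra)). nra.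
Qed.

End MultiscaleCode.

Fixpoint scale_lengths (N : nat -> nat) (k : nat) : nat :=
  match k with
  | O => S (N O)
  | S k' => (scale_lengths N k' * S (S (N (S k'))))%nat
  end.

Lemma scale_lengths_spec N k :
  (0 < scale_lengths N k)%nat /\ (N k <= scale_lengths N k)%nat /\ (k < scale_lengths N k)%nat.
Proof. induction k as [|k IH]; simpl; [lia | nia]. Qed.

Lemma scale_lengths_dvd N k : Nat.divide (scale_lengths N k) (scale_lengths N (S k)).
Proof. exists (S (S (N (S k)))). simpl. lia. Qed.

Lemma multiscale_selectors {X : Type} (d : X -> X -> R) (T : X -> X) (x : X) (lam c : R) :
  is_metric d -> 0 < c -> entropy_le (metric_gap d) T (fun _ => True) lam ->
  exists (L : nat -> nat) (reps : nat -> list nat) (rep : nat -> nat -> nat),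
    (forall k, (0 < L k)%nat /\ (k < L k)%nat /\ Nat.divide (L k) (L (S k))) /\
    (forall k, INR (length (reps k)) <= exp (INR (L k) * (lam + / (INR k + 1)))) /\
    (forall k m, In (rep k m) (reps k)) /\ (forall k, rep k 0%nat = 0%nat) /\
    (forall k m, shadows d T (L k) (c * (/ 2) ^ S k) (Nat.iter m T x) (Nat.iter (rep k m) T x)).
Proof.
  intros Hmet Hc Hent.
  assert (Hdd : forall y, d y y = 0) by (intro y; apply Hmet; reflexivity).
  destruct (functional_choice (fun k N => forall n, (N <= n)%nat ->
    exists (reps : list nat) (rep : nat -> nat),
      INR (length reps) <= exp (INR n * (lam + / (INR k + 1))) /\
      (forall m, In (rep m) reps) /\ rep 0%nat = 0%nat /\
      forall m, shadows d T n (c * (/ 2) ^ S k) (Nat.iter m T x) (Nat.iter (rep m) T x)))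
    as [N HN].
  { intros k. apply orbit_spanning_selector; auto.
    - apply Rmult_lt_0_compat; [exact Hc | apply pow_lt; lra].
    - apply Rinv_0_lt_compat. pose proof (pos_INR k). lra. }
  set (L := scale_lengths N).
  destruct (functional_choice (fun k (p : list nat * (nat -> nat)) =>
      INR (length (fst p)) <= exp (INR (L k) * (lam + / (INR k + 1))) /\
      (forall m, In (snd p m) (fst p)) /\ snd p 0%nat = 0%nat /\
      forall m, shadows d T (L k) (c * (/ 2) ^ S k) (Nat.iter m T x) (Nat.iter (snd p m) T x)))
    as [P HP].
  { intros k. destruct (HN k (L k) (proj1 (proj2 (scale_lengths_spec N k))))
      as (reps & rep & H). exists (reps, rep). exact H. }
  exists L, (fun k => fst (P k)), (fun k => snd (P k)).
  split; [| split; [| split; [| split]]]; intros k; try apply HP.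
  pose proof (scale_lengths_spec N k). pose proof (scale_lengths_dvd N k).
  unfold L. tauto.
Qed.

(** * Entropy of the anqie shift of a blockwise sequence *)

Section BlockEntropy.

Variables (X : Type) (d : X -> X -> R) (f : nat -> X).
Hypothesis d_metric : is_metric d.

Definition window (M p : nat) : list X := map (fun i => f (p + i)%nat) (seq 0 M).

Lemma window_nth M p i : (i < M)%nat -> nth i (window M p) (f p) = f (p + i)%nat.
Proof.
  intros Hi. unfold window.
  rewrite (nth_indep _ _ (f (p + 0)%nat)) by (rewrite length_map, length_seq; exact Hi).
  rewrite (map_nth (fun i => f (p + i)%nat)), seq_nth; auto.
Qed.

Lemma prod_gap_nsep_coordinate eps : 0 < eps ->
  exists K, forall n w w', nsep (prod_gap d) shift n eps w w' ->
    exists i, (i < n + K)%nat /\ eps < d (w i) (w' i).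
Proof.
  destruct d_metric as [Hpos _]. intros Heps.
  destruct (pow_lt_1_zero (/ 2) ltac:(rewrite Rabs_pos_eq; lra) eps Heps) as [K HK].
  exists K. intros n w w' (j & Hj & k & Hk). rewrite !iter_shift in Hk.
  assert (Hpow : 0 <= (/ 2) ^ k <= 1).
  { destruct k; [simpl; lra|]. destruct (pow_lt_1_compat (/ 2) (S k)); lra || lia. }
  assert (Hmin : 0 <= Rmin (d (w (j + k)%nat) (w' (j + k)%nat)) 1 <= d (w (j + k)%nat) (w' (j + k)%nat)).
  { split; [apply Rmin_glb; [apply Hpos | lra] | apply Rmin_l]. }
  exists (j + k)%nat. split.
  - destruct (Nat.lt_ge_cases k K) as [|HkK]; [lia|].
    specialize (HK k HkK). rewrite Rabs_pos_eq in HK by lra.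
    pose proof (Rmin_r (d (w (j + k)%nat) (w' (j + k)%nat)) 1). nra.
  - nra.
Qed.

(* Points of the anqie space are coded by nearby windows of [f]; separated points get
   distinct codes. *)
Lemma sep_set_length_le_windows n K eps (C : list (list X)) (E : list (nat -> X)) :
  0 < eps -> (forall p, In (window (n + K) p) C) ->
  (forall w w', nsep (prod_gap d) shift n eps w w' ->
     exists i, (i < n + K)%nat /\ eps < d (w i) (w' i)) ->
  sep_set (prod_gap d) shift (anqie_space d f) n eps E -> (length E <= length C)%nat.
Proof.
  destruct d_metric as (_ & _ & Hsym & Htri).
  intros Heps HC Hcoord [HEK HEsep]. set (M := (n + K)%nat) in *.
  destruct (functional_choice (fun (w : nat -> X) p => anqie_space d f w ->
       forall i, (i < M)%nat -> d (f (p + i)%nat) (w i) < eps / 2)) as [pos Hpos].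
  { intros w. destruct (classic (anqie_space d f w)) as [Hw|Hw].
    - destruct (Hw M (eps / 2) ltac:(lra)) as [p Hp]. exists p. auto.
    - exists 0%nat. contradiction. }
  rewrite <- (length_map (fun w => window M (pos w)) E).
  apply NoDup_incl_length.
  - apply NoDup_iff_ForallOrdPairs, ForallOrdPairs_map.
    apply (ForallOrdPairs_impl_Forall _ _ _ E) with (2 := HEK) (3 := HEsep).
    intros w w' Hw Hw' Hsep Heq. destruct (Hcoord w w' Hsep) as (i & Hi & Hd).
    assert (Hf : f (pos w + i)%nat = f (pos w' + i)%nat).
    { rewrite <- (window_nth M _ i Hi), <- (window_nth M _ i Hi), Heq. apply nth_indep.
      unfold window. rewrite length_map, length_seq. exact Hi. }
    pose proof (Hpos w Hw i Hi). pose proof (Hpos w' Hw' i Hi). rewrite <- Hf in H0.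
    pose proof (Htri (w i) (f (pos w + i)%nat) (w' i)).
    rewrite (Hsym (w i) (f _)) in H1. lra.
  - intros C0 HC0. apply in_map_iff in HC0 as [w [<- _]]. apply HC.
Qed.

(* A window of length [M] is read off its offset in the block grid and the
   [M / Lb + 2] blocks it meets; [f] is only a default word. *)
Definition block_windows (Lb M : nat) (W : list (nat -> X)) : list (list X) :=
  map (fun ot : nat * list (nat -> X) =>
         map (fun i => nth ((fst ot + i) / Lb) (snd ot) f ((fst ot + i) mod Lb)) (seq 0 M))
      (list_prod (seq 0 Lb) (tuples W (M / Lb + 2))).

Lemma length_block_windows Lb M W :
  length (block_windows Lb M W) = (Lb * length W ^ (M / Lb + 2))%nat.
Proof.
  unfold block_windows. rewrite length_map, length_prod, length_tuples, length_seq.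
  reflexivity.
Qed.

Lemma window_in_block_windows Lb M (W : list (nat -> X)) :
  (0 < Lb)%nat ->
  (forall q, exists w, In w W /\ forall b, (b < Lb)%nat -> f (q * Lb + b)%nat = w b) ->
  forall p, In (window M p) (block_windows Lb M W).
Proof.
  intros HLb Hblocks p.
  destruct (functional_choice _ Hblocks) as [blk Hblk].
  set (q := (p / Lb)%nat). set (o := (p mod Lb)%nat). set (bb := (M / Lb + 2)%nat).
  assert (Hp := Nat.div_mod p Lb ltac:(lia)). fold q o in Hp.
  assert (Ho : (o < Lb)%nat) by (apply Nat.mod_upper_bound; lia).
  apply in_map_iff. exists (o, map (fun r => blk (q + r)%nat) (seq 0 bb)). split.
  - apply map_ext_in. intros i Hi. apply in_seq in Hi. cbn [fst snd].
    set (u := ((o + i) / Lb)%nat). set (v := ((o + i) mod Lb)%nat).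
    assert (Hoi := Nat.div_mod (o + i) Lb ltac:(lia)). fold u v in Hoi.
    assert (Hv : (v < Lb)%nat) by (apply Nat.mod_upper_bound; lia).
    assert (Hu : (u < bb)%nat).
    { apply Nat.Div0.div_lt_upper_bound.
      pose proof (Nat.div_mod M Lb ltac:(lia)). pose proof (Nat.mod_upper_bound M Lb ltac:(lia)).
      unfold bb. nia. }
    rewrite (nth_indep _ _ (blk (q + 0)%nat)) by (rewrite length_map, length_seq; exact Hu).
    rewrite (map_nth (fun r => blk (q + r)%nat)), seq_nth by exact Hu.
    rewrite Nat.add_0_l, <- (proj2 (Hblk (q + u)%nat) v Hv). f_equal. nia.
  - apply in_prod; [apply in_seq; lia|]. apply in_tuples; [rewrite length_map, length_seq; reflexivity|].
    intros w Hw. apply in_map_iff in Hw as [r [<- _]]. apply Hblk.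
Qed.

Lemma block_count_le_exp (Lb K : nat) (s a e : R) :
  (0 < Lb)%nat -> 0 <= a -> 0 < e -> 0 <= s -> s <= exp (INR Lb * a) ->
  exists N, forall n, (N <= n)%nat -> INR Lb * s ^ ((n + K) / Lb + 2) <= exp (INR n * (a + e)).
Proof.
  intros HLb Ha He Hs Hsa.
  assert (HLbR : 0 < INR Lb) by (apply lt_0_INR; lia).
  destruct (INR_archimed e (ln (INR Lb) + (INR K + 2 * INR Lb) * a) He) as [N HN].
  exists N. intros n Hn. set (bb := ((n + K) / Lb + 2)%nat).
  assert (Hbb : (bb * Lb <= n + K + 2 * Lb)%nat).
  { unfold bb. pose proof (Nat.Div0.mul_div_le (n + K) Lb). nia. }
  apply le_INR in Hbb, Hn. rewrite mult_INR, !plus_INR, mult_INR in Hbb.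
  replace (INR 2) with 2 in Hbb by (simpl; lra).
  assert (Hpow : s ^ bb <= exp (INR bb * (INR Lb * a))).
  { rewrite <- exp_pow_INR. apply pow_incr. lra. }
  assert (Hexp : exp (INR bb * (INR Lb * a)) <= exp ((INR n + INR K + 2 * INR Lb) * a)).
  { apply exp_le_compat. rewrite <- Rmult_assoc. apply Rmult_le_compat_r; lra. }
  eapply Rle_trans; [apply Rmult_le_compat_l; [lra | eapply Rle_trans; [exact Hpow | exact Hexp]] |].
  rewrite <- (exp_ln (INR Lb)) at 1 by exact HLbR. rewrite <- exp_plus.
  apply exp_le_compat. nra.
Qed.

Lemma anqie_entropy_le_of_blocks lam : 0 <= lam ->
  (forall e, 0 < e -> exists (Lb : nat) (W : list (nat -> X)),
     (0 < Lb)%nat /\ INR (length W) <= exp (INR Lb * (lam + e)) /\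
     forall q, exists w, In w W /\ forall b, (b < Lb)%nat -> f (q * Lb + b)%nat = w b) ->
  anqie_entropy_le d f lam.
Proof.
  intros Hlam Hblocks eps Heps e He.
  destruct (prod_gap_nsep_coordinate eps Heps) as [K HK].
  destruct (Hblocks (e / 2) ltac:(lra)) as (Lb & W & HLb & HW & Hblk).
  destruct (block_count_le_exp Lb K (INR (length W)) (lam + e / 2) (e / 2))
    as [N HN]; try lra; auto using pos_INR.
  exists N. intros n Hn E HE.
  eapply Rle_trans.
  - apply le_INR, (sep_set_length_le_windows n K eps (block_windows Lb (n + K) W));
      auto using window_in_block_windows.
  - rewrite length_block_windows, mult_INR, pow_INR.
    replace (lam + e) with (lam + e / 2 + e / 2) by lra. apply HN, Hn.
Qed.

End BlockEntropy.

Theorem proposition1p9 (X : Type) (d : X -> X -> R) (T : X -> X) (lam : R)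
  (Hmet : is_metric d) (Hcpt : is_compact d) (Hcont : is_continuous d T)
  (Hlam : 0 <= lam) (Hent : top_entropy_eq d T lam) :
  forall (x : X) (eps : R), 0 < eps ->
    exists f : nat -> X,
      (forall n, exists m, f n = Nat.iter m T x) /\
      (exists l : list X, forall n, In (f n) l) /\
      anqie_entropy_le d f lam /\
      (exists c, c < eps /\ forall n, d (Nat.iter n T x) (f n) <= c).
Proof.
  intros x eps Heps.
  destruct (multiscale_selectors d T x lam (eps / 2) Hmet ltac:(lra) (proj1 Hent))
    as (L & reps & rep & HL & Hreps & Hrep_in & Hrep0 & Hshadow).
  assert (L_pos : forall k, (0 < L k)%nat) by apply HL.
  exists (fun n => Nat.iter (code L rep (S n) 0 n) T x).
  split; [| split; [| split]].
  - intros n. eexists; reflexivity.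
  - exists (map (fun m => Nat.iter m T x)
             (map (fun p => fst p + snd p)%nat (list_prod (reps 0%nat) (seq 0 (L 0%nat))))).
    intros n. apply (in_map (fun m => Nat.iter m T x)), code_diag_range; [exact L_pos | apply Hrep_in].
  - apply anqie_entropy_le_of_blocks; [exact Hmet | exact Hlam |]. intros e He.
    destruct (exists_inv_succ_le e He) as [j Hj].
    exists (L j), (map (fun s b => Nat.iter (code L rep j s b) T x) (reps j)).
    split; [apply L_pos | split].
    + rewrite length_map. eapply Rle_trans; [apply Hreps |].
      apply exp_le_compat, Rmult_le_compat_l; [apply pos_INR | lra].
    + intros q. destruct (code_diag_block L rep L_pos ltac:(apply HL) ltac:(apply HL) Hrep0 j q)
        as [s Hs].
      exists (fun b => Nat.iter (code L rep j (rep j s) b) T x).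
      split; [apply (in_map (fun s b => Nat.iter (code L rep j s b) T x)), Hrep_in |]. intros b Hb. rewrite Hs by exact Hb. reflexivity.
  - exists (eps / 2). split; [lra |]. intros n.
    apply (code_diag_dist L rep L_pos X d T x (eps / 2) Hmet Hshadow). lra.
Qed.
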